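(* For every base $\mathcal{B}$, atomic multisets $L,K$ and ILL formula $\chi$: if $\Vdash^L_{\mathcal{B}}1$ and $\Vdash^K_{\mathcal{B}}\chi$, then $\Vdash^{L,K}_{\mathcal{B}}\chi$.
   Context: Fix a set $\mathbb{A}$ of propositional atoms. ILL formulae: $\phi ::= p\in\mathbb{A} \mid \top \mid 0 \mid 1 \mid \phi\multimap\phi \mid \phi\otimes\phi \mid \phi\,\&\,\phi \mid \phi\oplus\phi \mid\ !\phi$. All multisets are finite; ''$\Gamma,\Delta$'' denotes multiset union. Atomic rules and bases: an atomic sequent is $P\Rightarrow p$ with $P$ a multiset of atoms, $p$ an atom. An atomic box is a multiset of atomic sequents. An atomic rule is a triple $\langle\mathbf{A},\mathbf{S},p\rangle$ with $\mathbf{A}$ a multiset of atomic boxes, $\mathbf{S}$ an atomic box, $p$ an atom. A base is a set of atomic rules. An atom $p$ is persistent in $\mathcal{B}$ if some $\langle\varnothing,\mathbf{S},p\rangle\in\mathcal{B}$ has $\mathbf{S}\neq\varnothing$. Derivability $\vdash_{\mathcal{B}}$: (Ref) $p\vdash_{\mathcal{B}}p$; (App) if $\langle\mathbf{A},\mathbf{S},p\rangle\in\mathcal{B}$ with $\mathbf{A}=\{\mathbf{T}_1,\dots,\mathbf{T}_m\}$, and there are atomic multisets $C_1,\dots,C_n$ ($n\ge m$) and a multiset $D=\{d_{m+1},\dots,d_n\}$ of atoms persistent in $\mathcal{B}$ such that $C_i,Q\vdash_{\mathcal{B}}q$ for every $i\le m$ and every $Q\Rightarrow q\in\mathbf{T}_i$,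 $C_j\vdash_{\mathcal{B}}d_j$ for every $m<j\le n$, and $D,U\vdash_{\mathcal{B}}v$ for every $U\Rightarrow v\in\mathbf{S}$, then $C_1,\dots,C_n\vdash_{\mathcal{B}}p$. Support $\Vdash^L_{\mathcal{B}}$ (base $\mathcal{B}$, atomic multiset $L$), by induction on formulae: $\Vdash^L_{\mathcal{B}}p$ iff $L\vdash_{\mathcal{B}}p$; $\Vdash^L_{\mathcal{B}}\varphi\multimap\psi$ iff $\varphi\Vdash^L_{\mathcal{B}}\psi$; $\Vdash^L_{\mathcal{B}}\varphi\otimes\psi$ iff for all $\mathcal{C}\supseteq\mathcal{B}$, atomic $K$, atoms $p$: if $\varphi,\psi\Vdash^K_{\mathcal{C}}p$ then $\Vdash^{L,K}_{\mathcal{C}}p$; $\Vdash^L_{\mathcal{B}}1$ iff for all $\mathcal{C}\supseteq\mathcal{B}$, $K$, $p$: if $\Vdash^K_{\mathcal{C}}p$ then $\Vdash^{L,K}_{\mathcal{C}}p$; $\Vdash^L_{\mathcal{B}}\varphi\&\psi$ iff $\Vdash^L_{\mathcal{B}}\varphi$ and $\Vdash^L_{\mathcal{B}}\psi$; $\Vdash^L_{\mathcal{B}}\varphi\oplus\psi$ iff for all $\mathcal{C}\supseteq\mathcal{B}$, $K$, $p$: if $\varphi\Vdash^K_{\mathcal{C}}p$ and $\psi\Vdash^K_{\mathcal{C}}p$ then $\Vdash^{L,K}_{\mathcal{C}}p$; $\Vdash^L_{\mathcal{B}}0$ iff $\Vdash^{L,K}_{\mathcal{B}}p$ for all atoms $p$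 and atomic $K$; $\Vdash^L_{\mathcal{B}}\top$ always; $\Vdash^L_{\mathcal{B}}!\varphi$ iff for all $\mathcal{C}\supseteq\mathcal{B}$, $K$, $p$: if (for all $\mathcal{D}\supseteq\mathcal{C}$, $\Vdash^{\varnothing}_{\mathcal{D}}\varphi$ implies $\Vdash^K_{\mathcal{D}}p$) then $\Vdash^{L,K}_{\mathcal{C}}p$. For nonempty multisets: $\Vdash^L_{\mathcal{B}}\Gamma,\Delta$ iff $L=K,M$ with $\Vdash^K_{\mathcal{B}}\Gamma$ and $\Vdash^M_{\mathcal{B}}\Delta$. For a nonempty antecedent written $!\Delta,\Theta$, where $!\Delta$ collects the formulae with top-level connective $!$ (with $\Delta$ the formulae under those $!$) and $\Theta$ contains none: $!\Delta,\Theta\Vdash^L_{\mathcal{B}}\varphi$ iff for all $\mathcal{C}\supseteq\mathcal{B}$ and atomic $K$, if $\Vdash^{\varnothing}_{\mathcal{C}}\delta$ for every $\delta\in\Delta$ and $\Vdash^K_{\mathcal{C}}\Theta$ then $\Vdash^{L,K}_{\mathcal{C}}\varphi$ (when $\Theta$ is empty, $K$ is empty). An empty antecedent: $\varnothing\Vdash^L_{\mathcal{B}}\varphi$ means $\Vdash^L_{\mathcal{B}}\varphi$. *)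

From Stdlib Require Import List Permutation.
Import ListNotations.

Set Implicit Arguments.

Section Sem.
Variable A : Type.

Inductive formula : Type :=
| Atom : A -> formula
| Top : formula
| Zero : formula
| One : formula
| Lolli : formula -> formula -> formula
| Tensor : formula -> formula -> formula
| With : formula -> formula -> formula
| Plus : formula -> formula -> formula
| Bang : formula -> formula.

(** Atomic multisets are lists of atoms, considered up to [Permutation].
    An atomic sequent [P => p] is a pair [(P, p)]; an atomic box is a list of
    atomic sequents; an atomic rule <A, S, p> is a record. *)
Definition aseq := (list A * A)%type.
Definition box := list aseq.

Record rule := mkRule { prem : list box ; sbox : box ; concl : A }.

Definition base := rule -> Prop.

Definition ext (B C : base) : Prop := forall r, B r -> C r.

Definition persistent (B : base) (p : A) : Prop :=
  exists r, B r /\ prem r = [] /\ sbox r <> [] /\ concl r = p.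

(** Derivability  L ⊢_B p.  In (App), [Cs] = C_1..C_m (paired with the boxes
    T_1..T_m of the rule) and [Ds] = the pairs (C_j, d_j) for m < j <= n. *)
Inductive deriv (B : base) : list A -> A -> Prop :=
| d_ref : forall p, deriv B [p] p
| d_app : forall (r : rule) (Cs : list (list A)) (Ds : list (list A * A)) (L : list A),
    B r ->
    length Cs = length (prem r) ->
    (forall i, i < length (prem r) ->
       forall Q q, In (Q, q) (nth i (prem r) []) -> deriv B (nth i Cs [] ++ Q) q) ->
    (forall Cd, In Cd Ds -> persistent B (snd Cd) /\ deriv B (fst Cd) (snd Cd)) ->
    (forall U v, In (U, v) (sbox r) -> deriv B (map snd Ds ++ U) v) ->
    Permutation L (concat Cs ++ concat (map fst Ds)) ->
    deriv B L (concl r).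

(** Antecedent items: a formula [!δ] in an antecedent contributes the
    condition ⊩^∅_C δ; any other formula φ contributes ⊩^{K_φ}_C φ. *)
Inductive item :=
| IBang : (base -> Prop) -> item
| IPlain : (base -> list A -> Prop) -> item.

Definition bang_conds (its : list item) (C : base) : Prop :=
  forall P, In (IBang P) its -> P C.

Definition plains (its : list item) : list (base -> list A -> Prop) :=
  flat_map (fun it => match it with IPlain P => [P] | IBang _ => [] end) its.

(** ⊩^K_C Θ for a multiset Θ of (non-!) formulae, given by their support
    predicates; for empty Θ, K is empty. *)
Fixpoint multi_supp (Ps : list (base -> list A -> Prop)) (C : base) (K : list A) : Prop :=
  match Ps with
  | [] => K = []
  | [P] => P C K
  | P :: Ps' => exists K1 K2, Permutation K (K1 ++ K2) /\ P C K1 /\ multi_supp Ps' C K2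
  end.

(** !Δ,Θ ⊩^L_B χ  (nonempty antecedent), with χ given by its support predicate. *)
Definition ant (its : list item) (B : base) (L : list A)
    (chi : base -> list A -> Prop) : Prop :=
  forall C K, ext B C -> bang_conds its C -> multi_supp (plains its) C K ->
    chi C (L ++ K).

Fixpoint supp (B : base) (L : list A) (phi : formula) {struct phi} : Prop :=
  match phi with
  | Atom p => deriv B L p
  | Lolli f g =>
      ant [match f with Bang d => IBang (fun C => supp C [] d)
                      | _ => IPlain (fun C M => supp C M f) end]
          B L (fun C M => supp C M g)
  | Tensor f g =>
      forall C K p, ext B C ->
        ant [match f with Bang d => IBang (fun C => supp C [] d)
                        | _ => IPlain (fun C M => supp C M f) end;
             match g with Bang d => IBang (fun C => supp C [] d)
                        | _ => IPlain (fun C M => supp C M g) end]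
            C K (fun D M => deriv D M p) ->
        deriv C (L ++ K) p
  | One => forall C K p, ext B C -> deriv C K p -> deriv C (L ++ K) p
  | With f g => supp B L f /\ supp B L g
  | Plus f g =>
      forall C K p, ext B C ->
        ant [match f with Bang d => IBang (fun C => supp C [] d)
                        | _ => IPlain (fun C M => supp C M f) end]
            C K (fun D M => deriv D M p) ->
        ant [match g with Bang d => IBang (fun C => supp C [] d)
                        | _ => IPlain (fun C M => supp C M g) end]
            C K (fun D M => deriv D M p) ->
        deriv C (L ++ K) p
  | Zero => forall p K, deriv B (L ++ K) p
  | Top => True
  | Bang f =>
      forall C K p, ext B C ->
        (forall D, ext C D -> supp D [] f -> deriv D K p) ->
        deriv C (L ++ K) p
  end.

End Sem.

From Stdlib Require Import List Permutation.

Set Implicit Arguments.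

(* Supporting 1 with L says exactly that L may be prepended to any atomic
   derivation in any extension of the base.  The clauses for atoms, 0, 1, ⊗, ⊕
   and ! all end in an atomic derivation from a context of the form L ++ K', so
   L can be prepended there directly (after reassociating); & is
   componentwise, ⊤ is trivial, and ⊸ follows by induction, because support
   of 1 is inherited by every extension of the base. *)

Section OneAbsorption.
Variable A : Type.

Lemma ext_refl (B : base A) : ext B B.
Proof. intros r Hr; exact Hr. Qed.

Lemma ext_trans (B C D : base A) : ext B C -> ext C D -> ext B D.
Proof. intros HBC HCD r Hr; apply HCD, HBC, Hr. Qed.

Lemma supp_one_ext (B C : base A) (L : list A) :
  supp B L (One A) -> ext B C -> supp C L (One A).
Proof.
  intros H1 HBC D K p HCD. apply H1, (ext_trans HBC HCD).
Qed.

Lemma supp_one_deriv (B C : base A) (L K : list A) (p : A) :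
  supp B L (One A) -> ext B C -> deriv C K p -> deriv C (L ++ K) p.
Proof. intros H1 HBC. exact (H1 C K p HBC). Qed.

End OneAbsorption.

Theorem lemma6 (A : Type) (B : base A) (L K : list A) (chi : formula A) :
  supp B L (One A) -> supp B K chi -> supp B (L ++ K) chi.
Proof.
  revert B L K.
  induction chi as [p| | | |f _ g IHg|f _ g _|f IHf g IHg|f _ g _|f _];
    intros B L K H1 H2; simpl in *.
  - exact (supp_one_deriv H1 (ext_refl B) H2).
  - exact I.
  - intros p K'. rewrite <- app_assoc.
    exact (supp_one_deriv H1 (ext_refl B) (H2 p K')).
  - intros C K' p HBC Hd. rewrite <- app_assoc.
    exact (supp_one_deriv H1 HBC (H2 C K' p HBC Hd)).
  - intros C M HBC Hbang Hplain. rewrite <- app_assoc.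
    exact (IHg C L (K ++ M) (supp_one_ext H1 HBC) (H2 C M HBC Hbang Hplain)).
  - intros C K' p HBC Hant. rewrite <- app_assoc.
    exact (supp_one_deriv H1 HBC (H2 C K' p HBC Hant)).
  - destruct H2 as [Hf Hg]. split; [apply IHf | apply IHg]; assumption.
  - intros C K' p HBC Hf Hg. rewrite <- app_assoc.
    exact (supp_one_deriv H1 HBC (H2 C K' p HBC Hf Hg)).
  - intros C K' p HBC Hbang. rewrite <- app_assoc.
    exact (supp_one_deriv H1 HBC (H2 C K' p HBC Hbang)).
Qed.
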